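(* Let $d\ge3$ and let $X,Y\in M_d(\mathbb{C})$ be diagonal matrices such that the pair $(X,Y)$ is generic. Then the matrix $H(X,Y)$ is positive definite, where $H(X,Y)$ is the hermitian matrix of order $2d^2$ given by $H=H_1-\tfrac12(H_2+H_3)+\tfrac14H_4$ with $$H_1=\begin{bmatrix}\|X\|^2&\operatorname{tr}(X^\dagger Y)\\ \operatorname{tr}(Y^\dagger X)&\|Y\|^2\end{bmatrix}\otimes I_{d^2},\qquad H_2=\begin{bmatrix}X^\dagger X&X^\dagger Y\\ Y^\dagger X&Y^\dagger Y\end{bmatrix}\otimes I_d,$$ $$H_3=\begin{bmatrix}I_d\otimes X^*X^T&I_d\otimes X^*Y^T\\ I_d\otimes Y^*X^T&I_d\otimes Y^*Y^T\end{bmatrix},\qquad H_4=\begin{bmatrix}\tilde X^*\tilde X^T&\tilde X^*\tilde Y^T\\ \tilde Y^*\tilde X^T&\tilde Y^*\tilde Y^T\end{bmatrix}.$$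
   Context: A pair $(X,Y)$ of matrices in $M_d(\mathbb{C})$ is generic if $X$ and $Y$ are linearly independent and some linear combination of $X$ and $Y$ is nonsingular. $Z^*$ is the entrywise complex conjugate, $Z^T$ the transpose, $Z^\dagger$ the conjugate transpose, $\|Z\|^2=\operatorname{tr}(Z^\dagger Z)$, $I_m$ the identity matrix of order $m$, and $A\otimes B=[a_{ij}B]$ for $A=[a_{ij}]$. For a matrix $Z$, $\tilde Z$ is the column vector obtained by stacking the columns of $Z$ one below the other, starting with the first. *)

From HB Require Import structures.
From mathcomp Require Import all_boot all_order all_algebra.
From mathcomp Require Import complex mxtens.
From mathcomp Require Import Rstruct.
From Stdlib Require Import Rdefinitions.
Set Implicit Arguments. Unset Strict Implicit. Unset Printing Implicit Defensive.
Import Order.TTheory GRing.Theory Num.Theory.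
Local Open Scope ring_scope.

Notation CC := (Rdefinitions.R[i]).

Definition mconj {m n} (Z : 'M[CC]_(m, n)) : 'M[CC]_(m, n) := map_mx Num.conj Z.
Definition adj {m n} (Z : 'M[CC]_(m, n)) : 'M[CC]_(n, m) := (mconj Z)^T.
Definition fnorm2 {n} (Z : 'M[CC]_n) : CC := \tr (adj Z *m Z).

(* Kronecker product A (x) B = [a_ij B]  (mathcomp real_closed's tensmx,
   whose index (i,k) is i * p + k). *)
Definition kron {m n p q} (A : 'M[CC]_(m, n)) (B : 'M[CC]_(p, q)) :
  'M[CC]_(m * p, n * q) := tensmx A B.

(* tilde Z : stacking the columns of Z, first column first;
   entry (j * d + i) is Z i j. *)
Definition colstack {d} (Z : 'M[CC]_d) : 'cV[CC]_(d * d) :=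
  \col_k Z (mxtens_unindex k).2 (mxtens_unindex k).1.

Definition lin_indep2 {d} (X Y : 'M[CC]_d) : Prop :=
  forall a b : CC, a *: X + b *: Y = 0 -> a = 0 /\ b = 0.
Definition generic_pair {d} (X Y : 'M[CC]_d) : Prop :=
  lin_indep2 X Y /\ exists a b : CC, \det (a *: X + b *: Y) != 0.

Definition posdef {n} (A : 'M[CC]_n) : Prop :=
  A = adj A /\ forall v : 'cV[CC]_n, v != 0 -> 0 < (adj v *m A *m v) 0 0.

Section H.
Variables (d : nat) (X Y : 'M[CC]_d).
Local Notation N := (d * d)%N.

Definition H1 : 'M[CC]_(N + N) :=
  block_mx ((fnorm2 X) *: (1%:M : 'M[CC]_N)) ((\tr (adj X *m Y)) *: 1%:M)
           ((\tr (adj Y *m X)) *: 1%:M) ((fnorm2 Y) *: 1%:M).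
(* [X^dag X, X^dag Y; Y^dag X, Y^dag Y] (x) I_d, written blockwise:
   (block matrix) (x) I_d has blocks (block) (x) I_d. *)
Definition H2 : 'M[CC]_(N + N) :=
  block_mx (kron (adj X *m X) (1%:M : 'M[CC]_d)) (kron (adj X *m Y) (1%:M : 'M[CC]_d))
           (kron (adj Y *m X) (1%:M : 'M[CC]_d)) (kron (adj Y *m Y) (1%:M : 'M[CC]_d)).
Definition H3 : 'M[CC]_(N + N) :=
  block_mx (kron (1%:M : 'M[CC]_d) (mconj X *m X^T)) (kron (1%:M : 'M[CC]_d) (mconj X *m Y^T))
           (kron (1%:M : 'M[CC]_d) (mconj Y *m X^T)) (kron (1%:M : 'M[CC]_d) (mconj Y *m Y^T)).
Definition H4 : 'M[CC]_(N + N) :=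
  block_mx (mconj (colstack X) *m (colstack X)^T) (mconj (colstack X) *m (colstack Y)^T)
           (mconj (colstack Y) *m (colstack X)^T) (mconj (colstack Y) *m (colstack Y)^T).
Definition Hmat : 'M[CC]_(N + N) := H1 - 2^-1 *: (H2 + H3) + 4^-1 *: H4.
End H.

From HB Require Import structures.
From mathcomp Require Import all_boot all_order all_algebra.
From mathcomp Require Import complex mxtens Rstruct ring.
Set Implicit Arguments. Unset Strict Implicit. Unset Printing Implicit Defensive.
Import Order.TTheory GRing.Theory Num.Theory.
Local Open Scope ring_scope.

(* For X = diag(a), Y = diag(b) every block of H acts diagonally on the
   coordinates v = (u, w), u w indexed by pairs (i, k), and with
   z(i,k,j) = a_j u_ik + b_j w_ik one finds
     v^† H v = 1/2 sum_(i,k,j) ([j != i] + [j != k]) |z(i,k,j)|^2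
             + 1/4 |sum_i z(i,i,i)|^2 >= 0.
   If this vanishes, z(i,k,j) = 0 unless i = j = k, and sum_i z(i,i,i) = 0.
   Genericity means that the rows (a_j, b_j) are nonzero and span C^2.  For
   i != k the vector (u_ik, w_ik) is then killed by every row, hence is 0.
   Two nonzero diagonal terms z(p,p,p), z(q,q,q) with p != q are impossible:
   using a third index r (here d >= 3 is needed), every row would be
   proportional to row r.  So at most one diagonal term survives and the sum
   condition kills it, after which (u_ii, w_ii) = 0 as before. *)

Lemma exists_ord_neq2 (d : nat) (p q : 'I_d) :
  (2 < d)%N -> exists r : 'I_d, (r != p) && (r != q).
Proof.
move=> d_gt2; apply/existsP; apply: contraTT d_gt2 => /existsPn pq_cover.
have : [set: 'I_d] \subset [set p; q].
  apply/subsetP => r _; move: (pq_cover r).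
  by rewrite negb_and !negbK !inE => /orP[] ->; rewrite ?orbT.
move/subset_leq_card; rewrite cardsT card_ord cards2 -leqNgt => le_d.
by apply: leq_trans le_d _; case: (p != q).
Qed.

Lemma det2_eq0 (R : idomainType) (a1 b1 a2 b2 x y : R) :
  a1 * x + b1 * y = 0 -> a2 * x + b2 * y = 0 -> (x != 0) || (y != 0) ->
  a1 * b2 - a2 * b1 = 0.
Proof.
move=> e1 e2 /orP[] /mulIf; apply.
- have -> : (a1 * b2 - a2 * b1) * x = b2 * (a1 * x + b1 * y) - b1 * (a2 * x + b2 * y) by ring.
  by rewrite e1 e2 !mulr0 subr0 mul0r.
- have -> : (a1 * b2 - a2 * b1) * y = a1 * (a2 * x + b2 * y) - a2 * (a1 * x + b1 * y) by ring.
  by rewrite e1 e2 !mulr0 subr0 mul0r.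
Qed.

Section VanishingPattern.
Variables (R : idomainType) (d : nat) (a b : 'I_d -> R) (U W : 'I_d * 'I_d -> R).
Hypothesis d_gt2 : (2 < d)%N.
Hypothesis ab_neq0 : forall j, (a j != 0) || (b j != 0).
Hypothesis ab_indep : forall x y, (forall j, a j * x + b j * y = 0) -> x = 0 /\ y = 0.
Hypothesis offdiag_eq0 :
  forall s j, (j != s.1) || (j != s.2) -> a j * U s + b j * W s = 0.

Let zdiag p := a p * U (p, p) + b p * W (p, p).

Lemma zdiag_support (p q : 'I_d) : zdiag p != 0 -> zdiag q != 0 -> p = q.
Proof.
have UW_neq0 r : zdiag r != 0 -> (U (r, r) != 0) || (W (r, r) != 0).
  by apply: contraNT; rewrite negb_or !negbK /zdiag => /andP[/eqP-> /eqP->]; rewrite !mulr0 addr0.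
move=> /UW_neq0 UWp /UW_neq0 UWq; apply/eqP; apply: contraT => pq.
have [r /andP[rp rq]] := exists_ord_neq2 p q d_gt2.
(* every row (a j, b j) is proportional to row r: it shares a nonzero kernel vector with it *)
have /ab_indep[br ar] : forall j, a j * b r + b j * (- a r) = 0.
  move=> j; rewrite mulrN [b j * _]mulrC.
  have [-> | jq] := eqVneq j q.
    by apply: (det2_eq0 _ _ UWp); apply: offdiag_eq0; rewrite /= ?(eq_sym q) ?pq ?rp.
  by apply: (det2_eq0 _ _ UWq); apply: offdiag_eq0; rewrite /= ?jq ?rq.
by move: (ab_neq0 r); rewrite br -oppr_eq0 ar eqxx.
Qed.

Lemma zdiag_eq0 : \sum_i zdiag i = 0 -> forall p, zdiag p = 0.
Proof.
move=> sum0 p; apply/eqP; apply: contraT => zp.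
move: sum0; rewrite (bigD1 p) //= big1 ?addr0 => [/eqP|q qp]; first by rewrite (negbTE zp).
by apply/eqP; apply: contraNT qp => zq; rewrite (zdiag_support zq zp).
Qed.

Lemma vanishing_pattern_eq0 : \sum_i zdiag i = 0 -> forall s, U s = 0 /\ W s = 0.
Proof.
move=> /zdiag_eq0 zdiag0 [i k]; apply: ab_indep => j.
have [<- | ij] := eqVneq i j; last by apply: offdiag_eq0; rewrite /= eq_sym ij.
have [<- | ik] := eqVneq i k; first exact: zdiag0.
by apply: offdiag_eq0; rewrite /= ik orbT.
Qed.

End VanishingPattern.

Section DiagonalForm.
Variables (C : numClosedFieldType) (d : nat).
Implicit Types (z : 'I_d * 'I_d -> 'I_d -> C).

Definition Hform z : C :=
  \sum_s \sum_j `|z s j| ^+ 2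
  - 2^-1 * (\sum_s `|z s s.1| ^+ 2 + \sum_s `|z s s.2| ^+ 2)
  + 4^-1 * `|\sum_i z (i, i) i| ^+ 2.

Lemma sum_natr_neq (I : finType) (i : I) (F : I -> C) :
  \sum_j (j != i)%:R * F j = \sum_j F j - F i.
Proof.
rewrite [in RHS](bigD1 i) //= (bigD1 i) //= eqxx mul0r add0r addrC addrK.
by apply: eq_bigr => j ->; rewrite mul1r.
Qed.

Lemma Hform_sos z :
  Hform z = 2^-1 * \sum_s \sum_j ((j != s.1) + (j != s.2))%:R * `|z s j| ^+ 2
            + 4^-1 * `|\sum_i z (i, i) i| ^+ 2.
Proof.
congr (_ + _); rewrite -big_split /= !mulr_sumr -sumrB; apply: eq_bigr => s _.
under [in RHS]eq_bigr do rewrite natrD mulrDl.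
rewrite big_split /= !sum_natr_neq.
have two_neq0 : (2 : C) != 0 by rewrite pnatr_eq0.
by field.
Qed.

Lemma Hform_ge0 z : 0 <= Hform z.
Proof.
rewrite Hform_sos addr_ge0 // mulr_ge0 ?invr_ge0 ?ler0n ?exprn_ge0 //.
by do 2!(apply: sumr_ge0 => ? _); rewrite mulr_ge0 ?ler0n ?exprn_ge0.
Qed.

Lemma Hform_eq0 z : Hform z = 0 ->
  (forall s j, (j != s.1) || (j != s.2) -> z s j = 0) /\ \sum_i z (i, i) i = 0.
Proof.
have term_ge0 s j : 0 <= ((j != s.1) + (j != s.2))%:R * `|z s j| ^+ 2.
  by rewrite mulr_ge0 ?ler0n ?exprn_ge0.
rewrite Hform_sos => /eqP; rewrite paddr_eq0; first last.
- by rewrite mulr_ge0 ?invr_ge0 ?ler0n ?exprn_ge0.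
- by rewrite mulr_ge0 ?invr_ge0 ?ler0n ?sumr_ge0 // => s _; rewrite sumr_ge0.
rewrite !mulf_eq0 !invr_eq0 !pnatr_eq0 /= orbb normr_eq0.
move=> /andP[/eqP sum0 /eqP ->]; split=> // s j jN.
have row_ge0 t : 0 <= \sum_j ((j != t.1) + (j != t.2))%:R * `|z t j| ^+ 2.
  by apply: sumr_ge0 => k _.
have row0 := psumr_eq0P (fun t _ => row_ge0 t) sum0 (i := s) isT.
have /eqP := psumr_eq0P (fun k _ => term_ge0 s k) row0 (i := j) isT.
rewrite mulf_eq0 pnatr_eq0 addn_eq0 !eqb0 sqrf_eq0 normr_eq0 -negb_or jN /=.
by move/eqP.
Qed.

End DiagonalForm.

Lemma adjK m n (A : 'M[CC]_(m, n)) : adj (adj A) = A.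
Proof. by apply/matrixP => i j; rewrite !mxE conjCK. Qed.

Lemma adjM m n p (A : 'M[CC]_(m, n)) (B : 'M[CC]_(n, p)) :
  adj (A *m B) = adj B *m adj A.
Proof. by rewrite /adj /mconj map_mxM trmx_mul. Qed.

Lemma adjD m n (A B : 'M[CC]_(m, n)) : adj (A + B) = adj A + adj B.
Proof. by rewrite /adj /mconj map_mxD raddfD. Qed.

Lemma adjN m n (A : 'M[CC]_(m, n)) : adj (- A) = - adj A.
Proof. by rewrite /adj /mconj map_mxN raddfN. Qed.

Lemma adjZ m n (c : CC) (A : 'M[CC]_(m, n)) : adj (c *: A) = c^* *: adj A.
Proof. by rewrite /adj /mconj map_mxZ linearZ. Qed.

Lemma adj1 n : adj (1%:M : 'M[CC]_n) = 1%:M.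
Proof. by rewrite /adj /mconj map_mx1 trmx1. Qed.

Lemma adj_kron m n p q (A : 'M[CC]_(m, n)) (B : 'M[CC]_(p, q)) :
  adj (kron A B) = kron (adj A) (adj B).
Proof. by rewrite /adj /mconj /kron map_mxT trmx_tens. Qed.

Lemma adj_block m1 m2 n1 n2 (A : 'M[CC]_(m1, n1)) (B : 'M[CC]_(m1, n2))
    (C : 'M[CC]_(m2, n1)) (D : 'M[CC]_(m2, n2)) :
  adj (block_mx A B C D) = block_mx (adj A) (adj C) (adj B) (adj D).
Proof. by rewrite /adj /mconj map_block_mx tr_block_mx. Qed.

Lemma adj_mconj_mulT m n p (A : 'M[CC]_(m, n)) (B : 'M[CC]_(p, n)) :
  adj (mconj A *m B^T) = mconj B *m A^T.
Proof.
have adj_tr k l (M : 'M[CC]_(k, l)) : adj M^T = mconj M by apply/matrixP => i j; rewrite !mxE.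
have adj_mconj k l (M : 'M[CC]_(k, l)) : adj (mconj M) = M^T.
  by apply/matrixP => i j; rewrite !mxE conjCK.
by rewrite adjM adj_tr adj_mconj.
Qed.

Lemma mxtrace_adj n (A : 'M[CC]_n) : \tr (adj A) = (\tr A)^*.
Proof. by rewrite mxtrace_tr rmorph_sum; apply: eq_bigr => i _; rewrite mxE. Qed.

Lemma conj_trace_adj_mul n (A B : 'M[CC]_n) : (\tr (adj A *m B))^* = \tr (adj B *m A).
Proof. by rewrite -mxtrace_adj adjM adjK. Qed.

Section Hermitian.
Variables (d : nat) (X Y : 'M[CC]_d).

Lemma H1_hermitian : adj (H1 X Y) = H1 X Y.
Proof. by rewrite /H1 /fnorm2 adj_block !adjZ !adj1 !conj_trace_adj_mul. Qed.

Lemma H2_hermitian : adj (H2 X Y) = H2 X Y.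
Proof. by rewrite /H2 adj_block !adj_kron !adjM !adjK !adj1. Qed.

Lemma H3_hermitian : adj (H3 X Y) = H3 X Y.
Proof. by rewrite /H3 adj_block !adj_kron !adj_mconj_mulT !adj1. Qed.

Lemma H4_hermitian : adj (H4 X Y) = H4 X Y.
Proof. by rewrite /H4 adj_block !adj_mconj_mulT. Qed.

Lemma Hmat_hermitian : adj (Hmat X Y) = Hmat X Y.
Proof.
rewrite /Hmat !adjD adjN !adjZ adjD H1_hermitian H2_hermitian H3_hermitian H4_hermitian.
by rewrite !fmorphV !rmorph_nat.
Qed.

End Hermitian.

Definition mxform m n (M : 'M[CC]_(m, n)) (u : 'cV[CC]_m) (w : 'cV[CC]_n) : CC :=
  (adj u *m M *m w) 0 0.

Lemma mxformD m n (M N : 'M[CC]_(m, n)) u w : mxform (M + N) u w = mxform M u w + mxform N u w.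
Proof. by rewrite /mxform mulmxDr mulmxDl mxE. Qed.

Lemma mxformN m n (M : 'M[CC]_(m, n)) u w : mxform (- M) u w = - mxform M u w.
Proof. by rewrite /mxform mulmxN mulNmx mxE. Qed.

Lemma mxformZ m n (c : CC) (M : 'M[CC]_(m, n)) u w : mxform (c *: M) u w = c * mxform M u w.
Proof. by rewrite /mxform -scalemxAr -scalemxAl mxE. Qed.

Lemma mxform_block n1 n2 (A : 'M[CC]_n1) (B : 'M[CC]_(n1, n2)) (C : 'M[CC]_(n2, n1))
    (D : 'M[CC]_n2) (u : 'cV[CC]_n1) (w : 'cV[CC]_n2) :
  mxform (block_mx A B C D) (col_mx u w) (col_mx u w) =
  mxform A u u + mxform B u w + mxform C w u + mxform D w w.
Proof.
rewrite /mxform /adj /mconj map_col_mx tr_col_mx mul_row_block mul_row_col.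
by rewrite !mulmxDl !mxE addrACA !addrA.
Qed.

Lemma mxform_block_gram n (P : Type) (T : finType) (M : P -> P -> 'M[CC]_n)
    (L : P -> 'cV[CC]_n -> T -> CC) :
  (forall p q u w, mxform (M p q) u w = \sum_t (L p u t)^* * L q w t) ->
  forall a b u w, mxform (block_mx (M a a) (M a b) (M b a) (M b b)) (col_mx u w) (col_mx u w)
    = \sum_t `|L a u t + L b w t| ^+ 2.
Proof.
move=> ML a b u w; rewrite mxform_block !ML -!big_split /=.
by apply: eq_bigr => t _; rewrite normCKC rmorphD /= mulrDl !mulrDr !addrA.
Qed.

Lemma mxform_diag n (r : 'rV[CC]_n) u w :
  mxform (diag_mx r) u w = \sum_i (u i 0)^* * r 0 i * w i 0.
Proof. by rewrite /mxform mul_mx_diag mxE; apply: eq_bigr => i _; rewrite !mxE. Qed.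

Lemma mxform_mconj_mulT n (x y : 'cV[CC]_n) u w :
  mxform (mconj x *m y^T) u w = (\sum_i x i 0 * u i 0)^* * \sum_i y i 0 * w i 0.
Proof.
rewrite /mxform mulmxA -[_ *m w]mulmxA mxE big_ord1 rmorph_sum !mxE; congr (_ * _).
  by apply: eq_bigr => i _; rewrite !mxE rmorphM mulrC.
by apply: eq_bigr => i _; rewrite !mxE.
Qed.

Lemma adj_diag n (p : 'rV[CC]_n) : adj (diag_mx p) = diag_mx (map_mx Num.conj p).
Proof. by rewrite /adj /mconj map_diag_mx tr_diag_mx. Qed.

Lemma sum_mxtens_index (V : nmodType) m n (F : 'I_(m * n) -> V) :
  \sum_r F r = \sum_s F (mxtens_index s).
Proof.
rewrite (reindex (@mxtens_index m n)) //.
by exists (@mxtens_unindex m n) => r _; rewrite (mxtens_indexK, mxtens_unindexK).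
Qed.

Lemma kron_diag m n (p : 'rV[CC]_m) (q : 'rV[CC]_n) :
  kron (diag_mx p) (diag_mx q) =
  diag_mx (\row_r (p 0 (mxtens_unindex r).1 * q 0 (mxtens_unindex r).2)).
Proof.
apply/matrixP => r c; case: (mxtens_indexP r) => i k; case: (mxtens_indexP c) => j l.
rewrite /kron tensmxE !mxE mxtens_indexK (inj_eq (can_inj (@mxtens_indexK m n))) xpair_eqE.
by case: (i =P j) => _; case: (k =P l) => _; rewrite ?mulr0n ?mulr1n ?mulr0 ?mul0r.
Qed.

Definition tcoord d (u : 'cV[CC]_(d * d)) (s : 'I_d * 'I_d) : CC := u (mxtens_index s) 0.

Lemma mxform_kron_diag d (p q : 'rV[CC]_d) u w :
  mxform (kron (diag_mx p) (diag_mx q)) u w =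
  \sum_s (tcoord u s)^* * (p 0 s.1 * q 0 s.2) * tcoord w s.
Proof.
rewrite kron_diag mxform_diag sum_mxtens_index.
by apply: eq_bigr => s _; rewrite mxE mxtens_indexK.
Qed.

Section DiagonalBlocks.
Variables (d : nat) (p q : 'rV[CC]_d) (u w : 'cV[CC]_(d * d)).

Lemma mxform_H1_block :
  mxform (\tr (adj (diag_mx p) *m diag_mx q) *: 1%:M) u w =
  \sum_(t : ('I_d * 'I_d) * 'I_d) (p 0 t.2 * tcoord u t.1)^* * (q 0 t.2 * tcoord w t.1).
Proof.
rewrite -(pair_bigA _ (fun s j => (p 0 j * tcoord u s)^* * (q 0 j * tcoord w s))) /=.
rewrite scalemx1 -diag_const_mx mxform_diag sum_mxtens_index.
apply: eq_bigr => s _; rewrite mxE adj_diag mulmx_diag mxtrace_diag mulr_sumr mulr_suml.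
by apply: eq_bigr => j _; rewrite /tcoord !mxE rmorphM /=; ring.
Qed.

Lemma mxform_H2_block :
  mxform (kron (adj (diag_mx p) *m diag_mx q) 1%:M) u w =
  \sum_s (p 0 s.1 * tcoord u s)^* * (q 0 s.1 * tcoord w s).
Proof.
rewrite adj_diag mulmx_diag -diag_const_mx mxform_kron_diag.
by apply: eq_bigr => s _; rewrite !mxE rmorphM /=; ring.
Qed.

Lemma mxform_H3_block :
  mxform (kron 1%:M (mconj (diag_mx p) *m (diag_mx q)^T)) u w =
  \sum_s (p 0 s.2 * tcoord u s)^* * (q 0 s.2 * tcoord w s).
Proof.
rewrite /mconj map_diag_mx tr_diag_mx mulmx_diag -diag_const_mx mxform_kron_diag.
by apply: eq_bigr => s _; rewrite !mxE rmorphM /=; ring.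
Qed.

Lemma sum_colstack_diag (r : 'rV[CC]_d) (x : 'cV[CC]_(d * d)) :
  \sum_c colstack (diag_mx r) c 0 * x c 0 = \sum_i r 0 i * tcoord x (i, i).
Proof.
transitivity (\sum_i \sum_k colstack (diag_mx r) (mxtens_index (i, k)) 0 * tcoord x (i, k)).
  by rewrite pair_bigA sum_mxtens_index; apply: eq_bigr => -[i k].
apply: eq_bigr => i _.
rewrite (bigD1 i) //= big1 => [|k ki]; rewrite mxE mxtens_indexK /= mxE.
  by rewrite eqxx mulr1n addr0.
by rewrite (negPf ki) mulr0n mul0r.
Qed.

Lemma mxform_H4_block :
  mxform (mconj (colstack (diag_mx p)) *m (colstack (diag_mx q))^T) u w =
  \sum_(t : 'I_1) (\sum_i p 0 i * tcoord u (i, i))^* * (\sum_i q 0 i * tcoord w (i, i)).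
Proof. by rewrite big_ord1 mxform_mconj_mulT !sum_colstack_diag. Qed.

End DiagonalBlocks.

Lemma mxform_Hmat_diag d (a b : 'rV[CC]_d) (u w : 'cV[CC]_(d * d)) :
  mxform (Hmat (diag_mx a) (diag_mx b)) (col_mx u w) (col_mx u w) =
  Hform (fun s j => a 0 j * tcoord u s + b 0 j * tcoord w s).
Proof.
rewrite /Hmat /H1 /H2 /H3 /H4 /fnorm2 !mxformD mxformN !mxformZ mxformD.
rewrite (mxform_block_gram (@mxform_H1_block d)) (mxform_block_gram (@mxform_H2_block d)).
rewrite (mxform_block_gram (@mxform_H3_block d)) (mxform_block_gram (@mxform_H4_block d)).
rewrite big_ord1 /Hform /= big_split /=.
by rewrite -(pair_bigA _ (fun s j => `|a 0 j * tcoord u s + b 0 j * tcoord w s| ^+ 2)).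
Qed.

Lemma tcoord_eq0 d (u : 'cV[CC]_(d * d)) : (forall s, tcoord u s = 0) -> u = 0.
Proof.
move=> u0; apply/matrixP => r c; rewrite (ord1 c) mxE.
by case: (mxtens_indexP r) => i k; apply: u0.
Qed.

Lemma generic_diag_neq0 d (a b : 'rV[CC]_d) :
  (exists x y : CC, \det (x *: diag_mx a + y *: diag_mx b) != 0) ->
  forall j, (a 0 j != 0) || (b 0 j != 0).
Proof.
move=> [x [y]]; rewrite -!linearZ -linearD /= det_diag => det_neq0 j.
apply: contraNT det_neq0; rewrite negb_or !negbK => /andP[/eqP aj0 /eqP bj0].
by apply/prodf_eq0; exists j => //; rewrite !mxE aj0 bj0 !mulr0 addr0.
Qed.

Lemma lin_indep2_diag d (a b : 'rV[CC]_d) : lin_indep2 (diag_mx a) (diag_mx b) ->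
  forall x y, (forall j, a 0 j * x + b 0 j * y = 0) -> x = 0 /\ y = 0.
Proof.
move=> indep x y ab0; apply: indep; rewrite -!linearZ -linearD /=.
by apply/matrixP => i j; rewrite !mxE [x * _]mulrC [y * _]mulrC ab0 mul0rn.
Qed.

Theorem theorem5p1 (d : nat) (X Y : 'M[CC]_d) :
  (3 <= d)%N -> is_diag_mx X -> is_diag_mx Y -> generic_pair X Y ->
  posdef (Hmat X Y).
Proof.
move=> d_gt2 /diag_mxP[a ->] /diag_mxP[b ->] [indep det_neq0].
split; first by rewrite Hmat_hermitian.
move=> v v_neq0; rewrite -[v]vsubmxK in v_neq0 *.
move: (usubmx v) (dsubmx v) v_neq0 => u w uw_neq0.
rewrite -/(mxform _ _ _) mxform_Hmat_diag lt_def Hform_ge0 andbT.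
apply: contraNneq uw_neq0 => /Hform_eq0[offdiag0 diag_sum0].
have uw0 := vanishing_pattern_eq0 d_gt2 (generic_diag_neq0 det_neq0)
  (lin_indep2_diag indep) offdiag0 diag_sum0.
by rewrite (tcoord_eq0 (fun s => (uw0 s).1)) (tcoord_eq0 (fun s => (uw0 s).2)) col_mx0.
Qed.
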